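(* For a multi-unit auction with $2$ bidders and $2$ identical items, where bidders have valuations with decreasing marginal values, no deterministic obviously strategy-proof mechanism that satisfies individual rationality and no negative transfers gives an approximation better than $2$; i.e., for every such mechanism there is a valuation profile $v$ with $\mathrm{OPT}(v)\ge 2\cdot W(v)$, or the ratio $\mathrm{OPT}(v)/W(v)$ has supremum at least $2$.
   Context: Bidder $i$'s valuation is $v_i:\{0,1,2\}\to\mathbb{R}_{\ge0}$ with $v_i(0)=0$ and decreasing marginals: $v_i(1)-v_i(0)\ge v_i(2)-v_i(1)$. The domain $V_i$ is all such valuations; valuations are private, utilities quasi-linear. A deterministic mechanism is a rooted tree: each internal node is assigned to one bidder, who sends one of the messages labeling the outgoing edges; each leaf is labeled with a feasible allocation and a payment per bidder. A behavior $B_i$ specifies a message at every node of bidder $i$; a profile $B$ determines a path $\mathrm{Path}(B)$ with allocation $f_i(B)$ and payment $p_i(B)$. A strategy $\mathcal S_i$ maps each $v_i\in V_i$ to a behavior; it is obviously dominant if for every $v_i\in V_i$, every node $u$ of $i$, every $B_{-i}$ and every profile $B'$ with $u\in\mathrm{Path}(\mathcal S_i(v_i),B_{-i})\cap\mathrm{Path}(B')$ and $B'_i$ sending at $u$ a message different from $\mathcal S_i(v_i)$'s, $v_i(f_i(\mathcal S_i(v_i),B_{-i}))-p_i(\mathcal S_i(v_i),B_{-i})\ge v_i(f_i(B'))-p_i(B')$. The mechanism is OSP if all strategies are obviously dominant; individually rational if for every profile in $V_1\times V_2$ following the strategies gives each bidder utility $\ge0$; satisfies no negative transfers if all payments at all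 leaves are $\ge0$. $W(v)$ is the welfare of the allocation reached on profile $v$ when bidders follow their strategies, $\mathrm{OPT}(v)$ the optimal welfare; approximation better than $2$ means $\sup_v\mathrm{OPT}(v)/W(v)<2$. *)

From Stdlib Require Import Reals List Bool.
Open Scope R_scope.

Definition bidder := bool.

(** A valuation v : {0,1,2} -> R is represented by the pair (v 1, v 2);
    v 0 = 0 is built in. *)
Definition valuation := (R * R)%type.

Definition val (v : valuation) (k : nat) : R :=
  match k with
  | O => 0
  | S O => fst v
  | _ => snd v
  end.

Definition in_domain (v : valuation) : Prop :=
  0 <= val v 1 /\ 0 <= val v 2 /\ val v 1 - val v 0 >= val v 2 - val v 1.

(** A deterministic mechanism: a rooted tree. *)
Inductive mech (M : Type) : Type :=
| Leaf : (bidder -> nat) -> (bidder -> R) -> mech M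
| Node : bidder -> (M -> mech M) -> mech M.
Arguments Leaf {M} _ _.
Arguments Node {M} _ _.

(** Nodes are identified by their history (sequence of messages from the
    root).  A behavior gives a message at every node (history). *)
Definition behavior (M : Type) := list M -> M.
Definition profile (M : Type) := bidder -> behavior M.

Fixpoint run_from {M : Type} (t : mech M) (h : list M) (B : profile M)
  : (bidder -> nat) * (bidder -> R) :=
  match t with
  | Leaf a p => (a, p)
  | Node i ch => run_from (ch (B i h)) (h ++ (B i h :: nil)) B
  end.

Definition outcome {M : Type} (t : mech M) (B : profile M) := run_from t nil B.
Definition alloc {M : Type} (t : mech M) (B : profile M) (i : bidder) : nat :=
  fst (outcome t B) i.
Definition pay {M : Type} (t : mech M) (B : profile M) (i : bidder) : R :=
  snd (outcome t B) i.

Fixpoint path_from {M : Type} (t : mech M) (h : list M) (B : profile M)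
  : list (list M * bidder) :=
  match t with
  | Leaf _ _ => nil
  | Node i ch => (h, i) :: path_from (ch (B i h)) (h ++ (B i h :: nil)) B
  end.

Definition on_path {M : Type} (t : mech M) (B : profile M) (h : list M) (i : bidder) : Prop :=
  In (h, i) (path_from t nil B).

Definition override {M : Type} (B : profile M) (i : bidder) (b : behavior M) : profile M :=
  fun j => if Bool.eqb j i then b else B j.

Definition utility {M : Type} (v : valuation) (t : mech M) (B : profile M) (i : bidder) : R :=
  val v (alloc t B i) - pay t B i.

Definition strategy (M : Type) := valuation -> behavior M.

Definition obviously_dominant {M : Type} (t : mech M) (i : bidder) (Si : strategy M) : Prop :=
  forall vi : valuation, in_domain vi ->
  forall (h : list M) (Bmi B' : profile M),
    on_path t (override Bmi i (Si vi)) h i ->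
    on_path t B' h i ->
    B' i h <> Si vi h ->
    utility vi t (override Bmi i (Si vi)) i >= utility vi t B' i.

Definition OSP {M : Type} (t : mech M) (S : bidder -> strategy M) : Prop :=
  forall i, obviously_dominant t i (S i).

Definition follow {M : Type} (S : bidder -> strategy M) (v : bidder -> valuation) : profile M :=
  fun j => S j (v j).

Fixpoint all_leaves {M : Type} (P : (bidder -> nat) -> (bidder -> R) -> Prop) (t : mech M) : Prop :=
  match t with
  | Leaf a p => P a p
  | Node _ ch => forall m, all_leaves P (ch m)
  end.

Definition feasible_mech {M : Type} (t : mech M) : Prop :=
  all_leaves (fun a _ => (a true + a false <= 2)%nat) t.

Definition individually_rational {M : Type} (t : mech M) (S : bidder -> strategy M) : Prop :=
  forall v : bidder -> valuation, (forall j, in_domain (v j)) ->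
  forall i, utility (v i) t (follow S v) i >= 0.

Definition no_negative_transfers {M : Type} (t : mech M) : Prop :=
  all_leaves (fun _ p => forall i, 0 <= p i) t.

Definition welfare {M : Type} (t : mech M) (S : bidder -> strategy M) (v : bidder -> valuation) : R :=
  val (v true) (alloc t (follow S v) true) + val (v false) (alloc t (follow S v) false).

Definition OPT (v : bidder -> valuation) : R :=
  fold_right Rmax 0
    (map (fun k => val (v true) (fst k) + val (v false) (snd k))
       ((0,0) :: (1,0) :: (0,1) :: (2,0) :: (1,1) :: (0,2) :: nil)%nat).

(* Fix a ratio c < 2.  At a node reached by every profile of valuations with
   positive first-unit values, the owner's message cannot depend on her
   (positive) valuation.  Otherwise some type u and a unit-demand type of value
   X > 2 u(1) send different messages there.  Against a large additive
   opponent the approximation forces the unit-demand bidder to get nothing, so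
   her utility is at most 0 (no negative transfers); against a tiny unit-demand
   opponent the type u must be served, and by individual rationality pays at
   most its value u(k) <= 2 u(1) < X, so mimicking u would give the unit-demand bidder
   positive utility, contradicting obvious dominance.  Hence all these
   profiles follow the same path to the same leaf, and one fixed allocation
   cannot c-approximate both (additive 1, tiny) and its mirror image. *)
From Stdlib Require Import Reals Lra Lia List Classical FunctionalExtensionality.
Open Scope R_scope.

Definition unit_demand (X : R) : valuation := (X, X).
Definition additive (K : R) : valuation := (K, 2 * K).

Definition pos_valuation (v : valuation) : Prop := in_domain v /\ 0 < val v 1.
Definition pos_profile (v : bidder -> valuation) : Prop := forall j, pos_valuation (v j).

Definition vprofile (i : bidder) (x y : valuation) : bidder -> valuation :=
  fun j => if Bool.eqb j i then x else y.

Definition approximates {M : Type} (t : mech M) (S : bidder -> strategy M) (c : R) :=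
  forall v : bidder -> valuation, (forall j, in_domain (v j)) -> OPT v <= c * welfare t S v.

Definition on_every_pos_path {M : Type} (t : mech M) (S : bidder -> strategy M)
    (h : list M) (i : bidder) : Prop :=
  forall v, pos_profile v -> on_path t (follow S v) h i.

Definition agree_on_common_path {M : Type} (s : mech M) (h : list M)
    (P : profile M -> Prop) : Prop :=
  forall h' i, (forall B, P B -> In (h', i) (path_from s h B)) ->
  forall B B', P B -> P B' -> B i h' = B' i h'.

Lemma val_nonneg v k : in_domain v -> 0 <= val v k.
Proof. intros [H1 [H2 H3]]; destruct k as [|[|k]]; simpl in *; lra. Qed.

Lemma val_le_twice_val1 v k : in_domain v -> val v k <= 2 * val v 1.
Proof. intros [H1 [H2 H3]]; destruct k as [|[|k]]; simpl in *; lra. Qed.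

Lemma unit_demand_pos X : 0 < X -> pos_valuation (unit_demand X).
Proof. intros; unfold pos_valuation, in_domain; simpl; lra. Qed.

Lemma additive_pos K : 0 < K -> pos_valuation (additive K).
Proof. intros; unfold pos_valuation, in_domain; simpl; lra. Qed.

Lemma val_unit_demand_le X k : 0 <= X -> val (unit_demand X) k <= X.
Proof. intros; destruct k as [|[|k]]; simpl; lra. Qed.

Lemma val_additive_sum K a b : 0 <= K -> (a + b <= 2)%nat ->
  val (additive K) a + val (additive K) b <= 2 * K.
Proof.
  intros HK Hab.
  destruct a as [|[|[|a]]], b as [|[|[|b]]]; simpl; lia || lra.
Qed.

Lemma vprofile_self i x y : vprofile i x y i = x.
Proof. unfold vprofile; now rewrite Bool.eqb_reflx. Qed.

Lemma vprofile_in_domain i x y :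
  in_domain x -> in_domain y -> forall j, in_domain (vprofile i x y j).
Proof. intros Hx Hy j; unfold vprofile; now destruct (Bool.eqb j i). Qed.

Lemma vprofile_pos i x y :
  pos_valuation x -> pos_valuation y -> pos_profile (vprofile i x y).
Proof. intros Hx Hy j; unfold vprofile; now destruct (Bool.eqb j i). Qed.

Lemma pos_profile_in_domain v : pos_profile v -> forall j, in_domain (v j).
Proof. intros Hv j; apply Hv. Qed.

Lemma fold_right_Rmax_ge l x : In x l -> x <= fold_right Rmax 0 l.
Proof.
  induction l as [|y l IH]; simpl; intros Hx; [contradiction|].
  destruct Hx as [<- | Hx]; [apply Rmax_l|].
  eapply Rle_trans; [apply IH, Hx | apply Rmax_r].
Qed.

Lemma OPT_ge v a b : (a + b <= 2)%nat -> val (v true) a + val (v false) b <= OPT v.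
Proof.
  intros Hab; unfold OPT.
  apply fold_right_Rmax_ge.
  apply (in_map (fun k => val (v true) (fst k) + val (v false) (snd k)) _ (a, b)).
  destruct a as [|[|[|a]]], b as [|[|[|b]]]; simpl; lia || tauto.
Qed.

Lemma OPT_vprofile_ge i x y a b : (a + b <= 2)%nat ->
  val x a + val y b <= OPT (vprofile i x y).
Proof.
  intros Hab; destruct i.
  - exact (OPT_ge (vprofile true x y) a b Hab).
  - rewrite Rplus_comm; apply (OPT_ge (vprofile false x y) b a); lia.
Qed.

Lemma welfare_vprofile {M : Type} (t : mech M) S i x y :
  welfare t S (vprofile i x y) =
  val x (alloc t (follow S (vprofile i x y)) i)
  + val y (alloc t (follow S (vprofile i x y)) (negb i)).
Proof. unfold welfare; destruct i; simpl; [reflexivity | apply Rplus_comm]. Qed.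

Lemma all_leaves_run_from {M : Type} P (s : mech M) h B :
  all_leaves P s -> P (fst (run_from s h B)) (snd (run_from s h B)).
Proof.
  revert h; induction s as [a p | i ch IH]; simpl; intros h Hall; auto.
Qed.

Lemma alloc_feasible {M : Type} (t : mech M) B i :
  feasible_mech t -> (alloc t B i + alloc t B (negb i) <= 2)%nat.
Proof.
  intros Ht; pose proof (all_leaves_run_from _ t nil B Ht) as H.
  unfold alloc, outcome; destruct i; simpl in *; lia.
Qed.

Lemma pay_nonneg {M : Type} (t : mech M) B i :
  no_negative_transfers t -> 0 <= pay t B i.
Proof. intros Ht; exact (all_leaves_run_from _ t nil B Ht i). Qed.

Lemma override_follow_self {M : Type} (S : bidder -> strategy M) v i x :
  v i = x -> override (follow S v) i (S i x) = follow S v.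
Proof.
  intros <-; extensionality j; unfold override, follow.
  destruct (Bool.eqb j i) eqn:E; [now apply Bool.eqb_prop in E as ->|reflexivity].
Qed.

Lemma run_from_eq_of_agree {M : Type} (P : profile M -> Prop) (s : mech M) h :
  agree_on_common_path s h P ->
  forall B B', P B -> P B' -> run_from s h B = run_from s h B'.
Proof.
  revert h; induction s as [a p | i ch IH]; intros h Hagree B B' HB HB'; simpl;
    [reflexivity|].
  set (m := B i h).
  assert (Hm : forall B'', P B'' -> B'' i h = m).
  { intros B'' HB''; apply (Hagree h i); auto; intros; simpl; now left. }
  rewrite (Hm B' HB').
  apply IH; auto.
  intros h' j Hcommon; apply Hagree.
  intros B'' HB''; simpl; right; rewrite (Hm B'' HB''); auto.
Qed.

Section Approximation.

Variables (M : Type) (t : mech M) (S : bidder -> strategy M) (c : R).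
Hypothesis feasible : feasible_mech t.
Hypothesis approx : approximates t S c.
Hypothesis c_lt_2 : c < 2.

Lemma approx_ratio_pos : 0 < c.
Proof.
  set (v := fun _ : bidder => additive 1).
  assert (Hv : forall j, in_domain (v j)) by (intro; apply additive_pos; lra).
  assert (Hopt : 2 <= OPT v)
    by (eapply Rle_trans; [|apply (OPT_ge v 2 0); lia]; simpl; lra).
  assert (0 <= welfare t S v)
    by (apply Rplus_le_le_0_compat; apply val_nonneg, Hv).
  pose proof (approx v Hv); nra.
Qed.

Lemma approx_denies_unit_demand i X K : 0 < X -> 0 < K -> c * (X + K) < 2 * K ->
  alloc t (follow S (vprofile i (unit_demand X) (additive K))) i = 0%nat.
Proof.
  intros HX HK HXK.
  set (v := vprofile i (unit_demand X) (additive K)).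
  destruct (alloc t (follow S v) i) as [|n] eqn:Ea; [reflexivity|exfalso].
  pose proof (alloc_feasible t (follow S v) i feasible) as Hfeas.
  assert (Hother : val (additive K) (alloc t (follow S v) (negb i)) <= K).
  { rewrite Ea in Hfeas.
    destruct (alloc t (follow S v) (negb i)) as [|[|m]]; simpl; lia || lra. }
  assert (Hwelfare : welfare t S v <= X + K).
  { pose proof (val_unit_demand_le X (alloc t (follow S v) i) (Rlt_le _ _ HX)).
    unfold v; rewrite welfare_vprofile; fold v; lra. }
  assert (Hopt : 2 * K <= OPT v).
  { eapply Rle_trans; [|apply (OPT_vprofile_ge i _ _ 0 2); lia]; simpl; lra. }
  assert (Happ : OPT v <= c * welfare t S v).
  { apply approx, pos_profile_in_domain, vprofile_pos;
      [apply unit_demand_pos | apply additive_pos]; lra. }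
  pose proof approx_ratio_pos.
  assert (c * welfare t S v <= c * (X + K)) by (apply Rmult_le_compat_l; lra).
  lra.
Qed.

Lemma approx_serves_against_unit_demand i x e : in_domain x -> 0 < e -> c * e < val x 1 ->
  (1 <= alloc t (follow S (vprofile i x (unit_demand e))) i)%nat.
Proof.
  intros Hx He Hxe.
  set (v := vprofile i x (unit_demand e)).
  destruct (alloc t (follow S v) i) as [|n] eqn:Ea; [exfalso|lia].
  assert (Hopt : val x 1 <= OPT v).
  { eapply Rle_trans; [|apply (OPT_vprofile_ge i _ _ 1 0); lia]; simpl; lra. }
  assert (Happ : OPT v <= c * welfare t S v).
  { apply approx, vprofile_in_domain; [exact Hx | apply unit_demand_pos; lra]. }
  pose proof (val_unit_demand_le e (alloc t (follow S v) (negb i))).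
  pose proof approx_ratio_pos.
  assert (c * welfare t S v <= c * e).
  { unfold v; rewrite welfare_vprofile; fold v; rewrite Ea.
    apply Rmult_le_compat_l; simpl; lra. }
  lra.
Qed.

Lemma approx_alloc_nonconstant :
  ~ (forall v v', pos_profile v -> pos_profile v' ->
       forall j, alloc t (follow S v) j = alloc t (follow S v') j).
Proof.
  intros Hconst.
  pose proof approx_ratio_pos as Hc.
  (* [e] is small enough that c (2 + 2 e) = 2 + c < 4 <= OPT v1 + OPT v2. *)
  set (e := (2 - c) / (2 * c)).
  assert (He : c * e * 2 = 2 - c) by (unfold e; field; lra).
  assert (He0 : 0 < e) by (unfold e; apply Rdiv_lt_0_compat; lra).
  set (v1 := vprofile true (additive 1) (unit_demand e)).
  set (v2 := vprofile false (additive 1) (unit_demand e)).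
  assert (Hv1 : pos_profile v1)
    by (apply vprofile_pos; [apply additive_pos | apply unit_demand_pos]; lra).
  assert (Hv2 : pos_profile v2)
    by (apply vprofile_pos; [apply additive_pos | apply unit_demand_pos]; lra).
  set (a := alloc t (follow S v1)).
  assert (W1 : welfare t S v1 = val (additive 1) (a true) + val (unit_demand e) (a false))
    by apply welfare_vprofile.
  assert (W2 : welfare t S v2 = val (additive 1) (a false) + val (unit_demand e) (a true)).
  { unfold v2; rewrite welfare_vprofile; fold v2.
    now rewrite !(Hconst v2 v1 Hv2 Hv1). }
  assert (O1 : 2 <= OPT v1)
    by (eapply Rle_trans; [|apply (OPT_vprofile_ge true _ _ 2 0); lia]; simpl; lra).
  assert (O2 : 2 <= OPT v2)
    by (eapply Rle_trans; [|apply (OPT_vprofile_ge false _ _ 2 0); lia]; simpl; lra).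
  pose proof (approx v1 (pos_profile_in_domain v1 Hv1)).
  pose proof (approx v2 (pos_profile_in_domain v2 Hv2)).
  pose proof (val_additive_sum 1 (a true) (a false) ltac:(lra)
                (alloc_feasible t (follow S v1) true feasible)).
  pose proof (val_unit_demand_le e (a true)); pose proof (val_unit_demand_le e (a false)).
  assert (c * (welfare t S v1 + welfare t S v2) <= c * (2 + 2 * e))
    by (apply Rmult_le_compat_l; lra).
  lra.
Qed.

Hypothesis osp : OSP t S.
Hypothesis ir : individually_rational t S.
Hypothesis nnt : no_negative_transfers t.

Lemma unit_demand_utility_nonpos_against_additive i X K :
  0 < X -> 0 < K -> c * (X + K) < 2 * K ->
  utility (unit_demand X) t (follow S (vprofile i (unit_demand X) (additive K))) i <= 0.
Proof.
  intros HX HK HXK; unfold utility.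
  rewrite approx_denies_unit_demand by assumption; simpl.
  pose proof (pay_nonneg t (follow S (vprofile i (unit_demand X) (additive K))) i nnt).
  lra.
Qed.

Lemma mimic_utility_pos_against_unit_demand i u e X :
  in_domain u -> 0 < e -> c * e < val u 1 -> 2 * val u 1 < X ->
  utility (unit_demand X) t (follow S (vprofile i u (unit_demand e))) i > 0.
Proof.
  intros Hu He Hue HX.
  set (v := vprofile i u (unit_demand e)).
  pose proof (approx_serves_against_unit_demand i u e Hu He Hue) as Hserved; fold v in Hserved.
  assert (Hv : forall j, in_domain (v j))
    by (apply vprofile_in_domain; [exact Hu | apply unit_demand_pos; lra]).
  pose proof (ir v Hv i) as Hir; unfold v in Hir; rewrite vprofile_self in Hir; fold v in Hir.
  pose proof (val_le_twice_val1 u (alloc t (follow S v) i) Hu).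
  unfold utility in *.
  destruct (alloc t (follow S v) i) as [|[|m]]; simpl in *; lia || lra.
Qed.

Lemma osp_message_eq_unit_demand i h u X :
  on_every_pos_path t S h i -> pos_valuation u -> 2 * val u 1 < X ->
  S i u h = S i (unit_demand X) h.
Proof.
  intros Hcommon [Hu Hu1] HX; apply NNPP; intro Hne.
  pose proof approx_ratio_pos.
  set (K := 2 * X / (2 - c)).
  assert (HK : (2 - c) * K = 2 * X) by (unfold K; field; lra).
  assert (HK0 : 0 < K) by (unfold K; apply Rdiv_lt_0_compat; lra).
  set (e := val u 1 / 2).
  set (lose := vprofile i (unit_demand X) (additive K)).
  set (win := vprofile i u (unit_demand e)).
  assert (Hlose : utility (unit_demand X) t (follow S lose) i <= 0)
    by (apply unit_demand_utility_nonpos_against_additive; nra).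
  assert (Hwin : utility (unit_demand X) t (follow S win) i > 0)
    by (apply mimic_utility_pos_against_unit_demand; unfold e; auto; nra).
  assert (Hon_lose : on_path t (follow S lose) h i)
    by (apply Hcommon, vprofile_pos; [apply unit_demand_pos | apply additive_pos]; lra).
  assert (Hon_win : on_path t (follow S win) h i)
    by (apply Hcommon, vprofile_pos; [split; auto | apply unit_demand_pos; unfold e; lra]).
  assert (Hfollow : override (follow S lose) i (S i (unit_demand X)) = follow S lose)
    by (apply override_follow_self, vprofile_self).
  assert (Hdev : follow S win i h <> S i (unit_demand X) h)
    by (unfold follow, win; now rewrite vprofile_self).
  assert (Hobv : utility (unit_demand X) t
                   (override (follow S lose) i (S i (unit_demand X))) i
                 >= utility (unit_demand X) t (follow S win) i).
  { apply (osp i (unit_demand X) (proj1 (unit_demand_pos X ltac:(lra))) h);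
      [rewrite Hfollow; exact Hon_lose | exact Hon_win | exact Hdev]. }
  rewrite Hfollow in Hobv; lra.
Qed.

Lemma osp_message_independent i h x y :
  on_every_pos_path t S h i -> pos_valuation x -> pos_valuation y ->
  S i x h = S i y h.
Proof.
  intros Hcommon Hx Hy.
  set (X := 2 * (val x 1 + val y 1) + 1).
  destruct Hx as [Hx Hx1], Hy as [Hy Hy1].
  rewrite (osp_message_eq_unit_demand i h x X), (osp_message_eq_unit_demand i h y X);
    unfold X, pos_valuation in *; auto; lra.
Qed.

Lemma osp_pos_alloc_constant v v' : pos_profile v -> pos_profile v' ->
  forall j, alloc t (follow S v) j = alloc t (follow S v') j.
Proof.
  intros Hv Hv' j; unfold alloc, outcome.
  set (P := fun B => exists w, pos_profile w /\ B = follow S w).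
  rewrite (run_from_eq_of_agree P t nil) with (B' := follow S v');
    [reflexivity | | exists v | exists v']; auto.
  intros h i Hcommon B B' [w [Hw ->]] [w' [Hw' ->]].
  apply osp_message_independent; [|apply Hw|apply Hw'].
  intros u Hu; apply Hcommon; now exists u.
Qed.

End Approximation.

Theorem theorem3p12 :
  forall (M : Type) (t : mech M) (S : bidder -> strategy M),
    feasible_mech t ->
    OSP t S ->
    individually_rational t S ->
    no_negative_transfers t ->
    ~ (exists c : R, c < 2 /\
         forall v : bidder -> valuation, (forall j, in_domain (v j)) ->
           OPT v <= c * welfare t S v).
Proof.
  intros M t S Hfeas Hosp Hir Hnnt [c [Hc Happrox]].
  apply (approx_alloc_nonconstant M t S c); auto.
  apply (osp_pos_alloc_constant M t S c); auto.
Qed.
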